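(* For any integers $r\ge 2$ and $t\ge 3$, $dim_s(P_r\times K_t)=t\left\lceil \frac{r}{2}\right\rceil$.
   Context: $P_r$ is the path on $r$ vertices and $K_t$ the complete graph on $t$ vertices. The direct product $G\times H$ has vertex set $V(G)\times V(H)$, with $(a,b)$ adjacent to $(c,d)$ iff $ac\in E(G)$ and $bd\in E(H)$. For a connected graph $G$, $I_G[u,v]$ is the set of vertices lying on some shortest $u$–$v$ path; a vertex $w$ strongly resolves $u,v$ if $v\in I_G[u,w]$ or $u\in I_G[v,w]$; a strong resolving set is a set $S\subseteq V(G)$ such that every pair of vertices is strongly resolved by some vertex of $S$; $dim_s(G)$ is the minimum cardinality of a strong resolving set. *)

From mathcomp Require Import all_boot.
Set Implicit Arguments. Unset Strict Implicit. Unset Printing Implicit Defensive.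

Section Graphs.
Variable T : finType.
Variable e : rel T.

Fixpoint reach (n : nat) (u v : T) : bool :=
  if n is n'.+1 then [exists w, e u w && reach n' w v] else u == v.

(* graph distance: least n with a walk of length n; for a connected graph
   this is < #|T| (the fallback value #|T| is only used for unreachable pairs) *)
Definition gdist (u v : T) : nat := find (fun n => reach n u v) (iota 0 #|T|).

Definition interval (u v : T) : {set T} :=
  [set w | gdist u w + gdist w v == gdist u v].

Definition strongly_resolves (w u v : T) : bool :=
  (v \in interval u w) || (u \in interval v w).

Definition strong_resolving_set (S : {set T}) : bool :=
  [forall u, forall v, [exists w in S, strongly_resolves w u v]].

(* dim_s(G): minimum cardinality of a strong resolving set
   (setT is always one, so the default #|T| is never the answer by default) *)
Definition sdim : nat := \big[minn/#|T|]_(S : {set T} | strong_resolving_set S) #|S|.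
End Graphs.

Definition path_rel (r : nat) : rel 'I_r :=
  fun i j => (i.+1 == j :> nat) || (j.+1 == i :> nat).

Definition complete_rel (t : nat) : rel 'I_t := fun i j => i != j.

Definition direct_prod (A B : finType) (eA : rel A) (eB : rel B) : rel (A * B) :=
  fun x y => eA x.1 y.1 && eB x.2 y.2.
Arguments path_rel r : clear implicits.
Arguments complete_rel t : clear implicits.

(* A walk in P_r x K_t is a pair of walks of the same length, one in each
   factor; for t >= 3 the K_t-walk only constrains lengths 0 and 1, so the
   distance between two vertices is essentially the column distance in P_r,
   except that horizontally adjacent vertices of the same colour are at
   distance 3 and vertically aligned distinct vertices at distance 2.

   Lower bound: the vertices (i, a) and (i + 1 mod r, a) are strongly
   resolved only by themselves.  Hence in every colour a a strong resolving
   set contains a vertex cover of the cycle 0, 1, ..., r - 1, which has at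
   least ceil(r / 2) vertices.

   Upper bound: take all odd columns together with the last one.  Two
   vertices outside this set lie in even columns i <= j < r - 1, and the
   second one lies on a shortest path from the first one to a suitable
   vertex of column j + 1. *)

From mathcomp Require Import all_boot order zify.
Set Implicit Arguments. Unset Strict Implicit. Unset Printing Implicit Defensive.

Import Order.TTheory.

Section StrongResolving.
Variables (T : finType) (e : rel T).

Lemma gdist_eq_least_reach (u v : T) d :
  d < #|T| -> reach e d u v -> (forall m, m < d -> ~~ reach e m u v) ->
  gdist e u v = d.
Proof.
move=> ltdT duv lt_reach; rewrite /gdist.
have -> : #|T| = d + (#|T| - d).-1.+1 by lia.
have no_reach : ~~ has (fun n => reach e n u v) (iota 0 d).
  by apply/hasPn => m; rewrite mem_iota => /andP[_]; apply: lt_reach.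
by rewrite iotaD find_cat size_iota (negbTE no_reach) add0n /= duv addn0.
Qed.

Lemma gdistxx (u : T) : gdist e u u = 0.
Proof. by apply: gdist_eq_least_reach => //=; apply/card_gt0P; exists u. Qed.

Lemma strongly_resolvesC (w u v : T) :
  strongly_resolves e w u v = strongly_resolves e w v u.
Proof. by rewrite /strongly_resolves orbC. Qed.

Lemma strongly_resolvesl (u v : T) : strongly_resolves e u u v.
Proof. by rewrite /strongly_resolves !inE gdistxx addn0 eqxx orbT. Qed.

Lemma strongly_resolvesr (u v : T) : strongly_resolves e v u v.
Proof. by rewrite strongly_resolvesC strongly_resolvesl. Qed.

Lemma strong_resolving_set_mem (S : {set T}) (u v : T) :
  strong_resolving_set e S ->
  (forall w, w != u -> w != v -> ~~ strongly_resolves e w u v) ->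
  (u \in S) || (v \in S).
Proof.
move=> /forallP/(_ u)/forallP/(_ v)/existsP[w /andP[wS wuv]] only_uv.
have [<-|wu] := eqVneq w u; first by rewrite wS.
have [<-|wv] := eqVneq w v; first by rewrite wS orbT.
by move: (only_uv w wu wv); rewrite wuv.
Qed.

Lemma sdim_leq_card (S : {set T}) : strong_resolving_set e S -> sdim e <= #|S|.
Proof.
by move=> resS; rewrite /sdim -minEnat; exact: (@bigmin_le_cond _ nat _ #|T| S).
Qed.

Lemma leq_sdim m :
  m <= #|T| -> (forall S, strong_resolving_set e S -> m <= #|S|) -> m <= sdim e.
Proof. by move=> le_mT lb; rewrite /sdim -minEnat; apply: (@le_bigmin _ nat). Qed.

End StrongResolving.

Lemma reach_direct_prod (A B : finType) (eA : rel A) (eB : rel B) n (x y : A * B) :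
  reach (direct_prod eA eB) n x y = reach eA n x.1 y.1 && reach eB n x.2 y.2.
Proof.
case: y => y1 y2; elim: n x => [|n IHn] [x1 x2] /=; first by rewrite xpair_eqE.
apply/existsP/andP => [[[w1 w2]]|[/existsP[w1 /andP[e1 r1]] /existsP[w2 /andP[e2 r2]]]].
  rewrite IHn => /and3P[/andP[e1 e2] r1 r2].
  by split; apply/existsP; [exists w1 | exists w2]; rewrite ?e1 ?e2.
by exists (w1, w2); rewrite /direct_prod /= e1 e2 IHn r1 r2.
Qed.

Lemma reach_path r (hr : 2 <= r) n (i j : 'I_r) :
  reach (path_rel r) n i j = (i - j + (j - i) <= n) && ~~ odd (n + i + j).
Proof.
elim: n i => [|n IHn] i /=; first by rewrite -val_eqE /=; apply/eqP/andP; lia.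
apply/existsP/andP => [[k /andP[ik]]|[le_n par_n]].
  by rewrite IHn; move: ik; rewrite /path_rel; lia.
have [m [ltmr ebm]] : exists m, m < r /\
    [&& (i.+1 == m) || (m.+1 == i), m - j + (j - m) <= n & ~~ odd (n + m + j)].
  have := ltn_ord i; have := ltn_ord j.
  case: (ltngtP i j) => [lt_ij|gt_ij|eq_ij] ltj lti; first by exists i.+1; lia.
    by exists i.-1; lia.
  by case: (ltnP i.+1 r) => ?; [exists i.+1 | exists i.-1]; lia.
by exists (Ordinal ltmr); rewrite IHn.
Qed.

Lemma exists_ord_neq2 t (ht : 3 <= t) (a b : 'I_t) :
  exists c : 'I_t, (c != a) && (c != b).
Proof.
apply/existsP; apply: contraTT ht => /existsPn avoid; rewrite -ltnNge ltnS.
have cover : [set: 'I_t] \subset [set a; b].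
  by apply/subsetP => c _; move: (avoid c); rewrite !inE negb_and !negbK orbC.
rewrite -[t]card_ord -cardsT (leq_trans (subset_leq_card cover)) // cards2.
by case: (a != b).
Qed.

Lemma reach_complete t (ht : 3 <= t) n (a b : 'I_t) :
  reach (complete_rel t) n a b = ((n == 0) ==> (a == b)) && ((n == 1) ==> (a != b)).
Proof.
have reachS m x : reach (complete_rel t) m.+1 x b =
    [exists w, (x != w) && reach (complete_rel t) m w b] by [].
elim: n a => [|n IHn] a; first by rewrite /= andbT.
rewrite reachS; apply/existsP/idP => [[w /andP[aw]]|abn].
  by rewrite IHn; case: n {IHn} => [|n] //=; rewrite andbT => /eqP <-.
case: n IHn abn => [|n] IHn abn; first by exists b; rewrite /= eqxx andbT.
have [c /andP[ca cb]] := exists_ord_neq2 ht a b.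
by exists c; rewrite IHn eq_sym ca cb implybT.
Qed.

Lemma uphalf_leq_cycle_cover r (g : 'I_r -> bool) :
  (forall i, g i || g (ordS i)) -> uphalf r <= \sum_i g i.
Proof.
move=> cover.
(* every i is counted twice: as itself and as the successor of its predecessor *)
have : r <= \sum_i (g i + g (ordS i)).
  rewrite -[r in r <= _]card_ord -sum1_card; apply: leq_sum => i _.
  by move: (cover i); case: (g i); case: (g (ordS i)).
by rewrite big_split /= (reindex_inj (@ordS_inj r)) /= uphalf_half; lia.
Qed.

Lemma card_set_prod (A B : finType) (S : {set A * B}) :
  #|S| = \sum_(b : B) \sum_(a : A) ((a, b) \in S).
Proof.
rewrite exchange_big pair_bigA /= -sum1_card big_mkcond /=.
by apply: eq_bigr => -[a b] _; case: ((a, b) \in S).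
Qed.

Lemma sum_odd n : \sum_(0 <= i < n) odd i = n./2.
Proof.
elim: n => [|n IHn]; first by rewrite big_geq.
by rewrite big_nat_recr //= IHn uphalf_half addnC.
Qed.

Definition odd_last_cols r : {set 'I_r} := [set i : 'I_r | odd i || (i == r.-1 :> nat)].

Lemma card_odd_last_cols r : 0 < r -> #|odd_last_cols r| = uphalf r.
Proof.
move=> r_gt0; have -> : #|odd_last_cols r| = \sum_(0 <= i < r) (odd i || (i == r.-1)).
  rewrite -sum1_card big_mkcond big_mkord /=.
  by apply: eq_bigr => i _; rewrite inE; case: ifP.
set n := r.-1; rewrite (_ : r = n.+1) /=; last by rewrite /n; lia.
rewrite big_nat_recr //= eqxx orbT addn1 -sum_odd.
by congr _.+1; apply: eq_big_nat => i /andP[_ lt_in]; rewrite (ltn_eqF lt_in) orbF.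
Qed.

Section PathTimesComplete.
Variables r t : nat.
Hypotheses (hr : 2 <= r) (ht : 3 <= t).

Local Notation G := (direct_prod (path_rel r) (complete_rel t)).

(* The least n allowed by [reach_pk]: at least the column distance and of the
   same parity, where same-coloured vertices need n <> 1 and distinct-coloured
   ones n <> 0. *)
Definition pk_dist (x y : 'I_r * 'I_t) : nat :=
  let k := x.1 - y.1 + (y.1 - x.1) in
  if k == 0 then (if x.2 == y.2 then 0 else 2)
  else if k == 1 then (if x.2 == y.2 then 3 else 1) else k.

Lemma reach_pk n (x y : 'I_r * 'I_t) :
  reach G n x y = [&& x.1 - y.1 + (y.1 - x.1) <= n, ~~ odd (n + x.1 + y.1),
                      (n == 0) ==> (x.2 == y.2) & (n == 1) ==> (x.2 != y.2)].
Proof. by rewrite reach_direct_prod reach_path // reach_complete // !andbA. Qed.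

Lemma gdist_pk (x y : 'I_r * 'I_t) : gdist G x y = pk_dist x y.
Proof.
apply: gdist_eq_least_reach => [||m]; rewrite ?reach_pk /pk_dist.
  rewrite card_prod !card_ord.
  have := ltn_ord x.1; have := ltn_ord y.1; have := leq_mul hr ht.
  by case: (x.2 == y.2); repeat case: ifP => ?; nia.
all: by case: (x.2 == y.2); repeat case: ifP => ?; lia.
Qed.

Lemma strongly_resolves_pk (w u v : 'I_r * 'I_t) :
  strongly_resolves G w u v =
  (pk_dist u v + pk_dist v w == pk_dist u w) || (pk_dist v u + pk_dist u w == pk_dist v w).
Proof. by rewrite /strongly_resolves /interval !inE !gdist_pk. Qed.

Lemma not_strongly_resolves_ordS (i : 'I_r) (a : 'I_t) w :
  w != (i, a) -> w != (ordS i, a) -> ~~ strongly_resolves G w (i, a) (ordS i, a).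
Proof.
have : ordS i = i.+1 :> nat \/ i.+1 = r /\ ordS i = 0 :> nat.
  rewrite /=; case: (ltnP i.+1 r) => [lt_ir|le_ri]; first by left; rewrite modn_small.
  have last_i : i.+1 = r by have := ltn_ord i; lia.
  by right; rewrite last_i modnn.
move: (ordS i) => j next_ij; case: w => l c.
rewrite strongly_resolves_pk /pk_dist /= eqxx.
have := ltn_ord l; have := ltn_ord i; have := ltn_ord j.
have [->|_] := eqVneq c a; first rewrite !xpair_eqE eqxx !andbT -!val_eqE /=.
all: by repeat case: ifP => ?; lia.
Qed.

Lemma card_pk_resolving_ge (S : {set 'I_r * 'I_t}) :
  strong_resolving_set G S -> t * uphalf r <= #|S|.
Proof.
move=> resS; rewrite card_set_prod -[t in t * _]card_ord -sum_nat_const.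
apply: leq_sum => a _; apply: uphalf_leq_cycle_cover => i.
exact: strong_resolving_set_mem resS (@not_strongly_resolves_ordS i a).
Qed.

Lemma strongly_resolves_next_col (i j : 'I_r) (a b : 'I_t) (ltjr : j.+1 < r) :
  i <= j -> odd i = odd j -> exists c, strongly_resolves G (Ordinal ltjr, c) (i, a) (j, b).
Proof.
move=> le_ij par_ij; have [<-|ab] := eqVneq a b.
  have [c /andP[ca _]] := exists_ord_neq2 ht a a.
  have ac : (a == c) = false by rewrite eq_sym (negbTE ca).
  exists c; rewrite strongly_resolves_pk /pk_dist /= eqxx ac.
  by repeat case: ifP => ?; lia.
have ba : (b == a) = false by rewrite eq_sym (negbTE ab).
exists a; rewrite strongly_resolves_pk /pk_dist /= eqxx ba (negbTE ab).
by repeat case: ifP => ?; lia.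
Qed.

Definition odd_last_set : {set 'I_r * 'I_t} := setX (odd_last_cols r) [set: 'I_t].

Lemma card_odd_last_set : #|odd_last_set| = t * uphalf r.
Proof. by rewrite cardsX cardsT card_ord (card_odd_last_cols (ltnW hr)) mulnC. Qed.

Lemma odd_last_set_resolving : strong_resolving_set G odd_last_set.
Proof.
apply/forallP => u; apply/forallP => v.
have [uS|uS] := boolP (u \in odd_last_set).
  by apply/existsP; exists u; rewrite uS strongly_resolvesl.
have [vS|vS] := boolP (v \in odd_last_set).
  by apply/existsP; exists v; rewrite vS strongly_resolvesr.
wlog le_uv : u v uS vS / u.1 <= v.1.
  move=> gen; case: (leqP u.1 v.1) => [|/ltnW] le_uv; first exact: gen.
  have /existsP[w /andP[wS wvu]] := gen v u vS uS le_uv.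
  by apply/existsP; exists w; rewrite wS strongly_resolvesC.
move: u v uS vS le_uv => [i a] [j b]; rewrite !inE !andbT /= => iS jS le_ij.
have ltjr : j.+1 < r by have := ltn_ord j; lia.
have [c resc] : exists c, strongly_resolves G (Ordinal ltjr, c) (i, a) (j, b).
  by apply: strongly_resolves_next_col => //; lia.
by apply/existsP; exists (Ordinal ltjr, c); rewrite resc !inE /=; lia.
Qed.

End PathTimesComplete.

Theorem theorem37 (r t : nat) (hr : 2 <= r) (ht : 3 <= t) :
  sdim (direct_prod (path_rel r) (complete_rel t)) = t * uphalf r.
Proof.
apply/eqP; rewrite eqn_leq; apply/andP; split.
  by rewrite -(@card_odd_last_set r t hr); apply: sdim_leq_card; exact: odd_last_set_resolving.
apply: leq_sdim; last exact: card_pk_resolving_ge.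
by rewrite card_prod !card_ord mulnC leq_mul // uphalf_half; lia.
Qed.
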